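(* Let $X$ be a topological space and $U,V\subset X$ path-connected open subsets with $X=U\cup V$, such that $U\cap V$ has $m+1$ path-connected components $A_0,A_1,\dots,A_m$, $m\ge 1$. Let $a_i\in A_i$ for each $i$ and $Y=\{a_0,a_1,\dots,a_m\}$, and let $G$ be a group. Then the square of restriction maps $H^1(X,Y)\xrightarrow{r_U}H^1(U,Y)\xrightarrow{r_{U\cap V}}H^1(U\cap V,Y)$, $H^1(X,Y)\xrightarrow{r_V}H^1(V,Y)\xrightarrow{r_{U\cap V}}H^1(U\cap V,Y)$ is commutative and cartesian (i.e. $(r_U,r_V)$ is a bijection from $H^1(X,Y)$ onto the fibered product of $H^1(U,Y)$ and $H^1(V,Y)$ over $H^1(U\cap V,Y)$). Moreover there is a canonical bijection between $H^1(U\cap V,Y)$ and $\prod_i H^1(A_i,a_i)$, given by restricting to the components $A_i$.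
   Context: Conventions: a path in $W$ is a continuous map $[0,1]\to W$; $P(W)$ is the set of paths; $p\cdot q$ is concatenation; homotopies of paths are relative to $\{0,1\}$, $\sim$ denotes homotopy. $G$ has unit $1$. For $Y\subset W$: a $0$-cochain of $(W,Y)$ is $c\colon W\to G$ with $c|_Y=1$, forming a group $C^0(W,Y)$ under pointwise multiplication. A $1$-cochain is $u\colon P(W)\to G$ with $u(p)=1$ for paths in $Y$; a cocycle satisfies $u(p)=u(q)$ if $p\sim q$ and $u(p\cdot q)=u(p)u(q)$ when defined. $C^0(W,Y)$ acts on cocycles by $(c\bullet u)(p)=c(p(0))u(p)c(p(1))^{-1}$; $H^1(W,Y)$ is the orbit set; $(W,b)=(W,\{b\})$. For $S\subset W$, $r_S\colon H^1(W,Y)\to H^1(S,Y\cap S)$ is induced by restricting cocycles to paths in $S$. *)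

From HB Require Import structures.
From mathcomp Require Import all_boot all_order all_algebra.
From mathcomp Require Import all_classical all_reals topology normedtype.
From mathcomp Require Import monoid.
Import numFieldNormedType.Exports.
Set Implicit Arguments. Unset Strict Implicit. Unset Printing Implicit Defensive.
Import Order.TTheory GRing.Theory Num.Theory.
Local Open Scope classical_set_scope.
Local Open Scope ring_scope.

Section NonAbelianH1.
Variables (R : realType) (X : topologicalType) (G : groupType).

Local Notation I01 := ([set x : R | 0 <= x <= 1]).

(* a path in W : a map [0,1] -> W, represented by a function R -> X that is
   continuous on [0,1] (subspace topology) and maps [0,1] into W. *)
Definition is_path (W : set X) (p : R -> X) : Prop :=
  {within I01, continuous p} /\ (forall s, I01 s -> W (p s)).

Definition path_homotopic (W : set X) (p q : R -> X) : Prop :=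
  is_path W p /\ is_path W q /\
  exists H : R * R -> X,
    {within I01 `*` I01, continuous H} /\
    (forall st, (I01 `*` I01) st -> W (H st)) /\
    (forall s, I01 s -> H (s, 0) = p s) /\
    (forall s, I01 s -> H (s, 1) = q s) /\
    (forall t, I01 t -> H (0, t) = p 0) /\
    (forall t, I01 t -> H (1, t) = p 1).

(* concatenation p . q (meaningful when p 1 = q 0) *)
Definition path_concat (p q : R -> X) : R -> X :=
  fun s => if (s <= 2^-1) then p (2 * s) else q (2 * s - 1).

Definition cocycle (W Y : set X) (u : (R -> X) -> G) : Prop :=
  (forall p, is_path (W `&` Y) p -> u p = one) /\
  (forall p q, path_homotopic W p q -> u p = u q) /\
  (forall p q, is_path W p -> is_path W q -> p 1 = q 0 ->
     u (path_concat p q) = mul (u p) (u q)).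

Definition cochain0 (W Y : set X) (c : X -> G) : Prop :=
  forall x, W x -> Y x -> c x = one.

(* two cocycles of (W,Y) define the same class in H^1(W,Y), i.e. lie in the
   same orbit of the action (c . u)(p) = c(p(0)) u(p) c(p(1))^-1 *)
Definition cohomologous (W Y : set X) (u v : (R -> X) -> G) : Prop :=
  exists c : X -> G, cochain0 W Y c /\
    forall p, is_path W p -> v p = mul (mul (c (p 0)) (u p)) (inv (c (p 1))).

Definition path_connected (W : set X) : Prop :=
  W !=set0 /\
  forall x y, W x -> W y -> exists p, is_path W p /\ p 0 = x /\ p 1 = y.

Definition path_components_of (S : set X) n (A : 'I_n -> set X) : Prop :=
  (forall i, A i `<=` S) /\ (forall i, A i !=set0) /\
  (forall i j, i != j -> A i `&` A j = set0) /\
  (forall x y, S x -> S y ->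
     ((exists p, is_path S p /\ p 0 = x /\ p 1 = y) <->
      exists i, A i x /\ A i y)).

End NonAbelianH1.

(* Restriction only forgets values of cocycles and cochains, so all restriction maps
   are well defined and the square commutes.  For surjectivity, twist the V-cocycle by
   the 0-cochain relating the two given cocycles on U `&` V, so that they agree on paths
   of U `&` V; a path of X is then cut, by the Lebesgue number lemma, into pieces lying
   in U or in V, and the glued cocycle is the product of the values on the pieces.  It
   does not depend on the subdivision (pass to a common refinement), it is
   multiplicative, and it is homotopy invariant: subdividing a homotopy square into
   small squares, each mapped into U or into V, the cocycle identity on each small
   square makes the products along consecutive rows telescope.  For injectivity the
   0-cochains on U and on V agree on U `&` V, since each of its points is joined inside
   U `&` V to some a_i where both are trivial, so they glue to a 0-cochain on X.
   Finally a path of U `&` V never leaves the component of its origin, whence the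
   splitting of H^1(U `&` V, Y) over the components. *)

From HB Require Import structures.
From mathcomp Require Import all_boot all_order all_algebra.
From mathcomp Require Import all_classical all_reals topology normedtype.
From mathcomp Require Import monoid.
From mathcomp Require Import interval_inference ring lra.
Import numFieldNormedType.Exports.
Import Order.TTheory GRing.Theory Num.Theory.
Set Implicit Arguments. Unset Strict Implicit.
Local Open Scope classical_set_scope.
Local Open Scope ring_scope.

Lemma within_comp_continuous (T1 T2 T3 : topologicalType) (A : set T1) (B : set T2)
    (f : T1 -> T2) (g : T2 -> T3) :
  continuous f -> (forall x, A x -> B (f x)) -> {within B, continuous g} ->
  {within A, continuous (g \o f)}.
Proof.
move=> cf fAB /subspace_continuousP cg; apply/subspace_continuousP => x Ax.
apply: (cvg_comp _ _ _ (cg _ (fAB _ Ax))).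
move=> W; rewrite /= !nbhs_simpl /within => h.
have := cf x _ h; rewrite nbhs_simpl /=.
by apply: filterS => y Wy Ay; apply/Wy/fAB.
Qed.

Lemma pair_continuous (T U V : topologicalType) (f : T -> U) (g : T -> V) :
  continuous f -> continuous g -> continuous (fun x => (f x, g x)).
Proof. by move=> cf cg x; apply: cvg_pair; [exact: cf | exact: cg]. Qed.

Section Products.
Variable G : groupType.
Local Open Scope group_scope.

Lemma prod_telescope n (a b c : nat -> G) :
  (forall k, (k < n)%N -> a k * b k.+1 = b k * c k) ->
  (\prod_(0 <= k < n) a k) * b n = b 0%N * \prod_(0 <= k < n) c k.
Proof.
elim: n => [_|n IH h]; first by rewrite !big_geq // mul1g mulg1.
rewrite !big_nat_recr //= -mulgA h // !mulgA IH // => k kn.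
by apply: h; apply: ltnW.
Qed.

Lemma prod_nat_add n m (f : nat -> G) :
  \prod_(0 <= i < n + m) f i = \prod_(0 <= i < n) f i * \prod_(0 <= j < m) f (n + j)%N.
Proof.
rewrite (@big_cat_nat _ _ _ n) ?leq_addr //=; congr (_ * _).
rewrite -[X in \big[_/_]_(X <= _ < _) _](add0n n) big_addn addKn.
by apply: eq_bigr => i _; rewrite addnC.
Qed.

Lemma prod_nat_mul n m (f : nat -> G) :
  \prod_(0 <= i < n * m) f i = \prod_(0 <= k < n) \prod_(0 <= i < m) f (k * m + i)%N.
Proof.
elim: n => [|n IH]; first by rewrite mul0n !big_geq.
by rewrite mulSnr prod_nat_add IH big_nat_recr.
Qed.

End Products.

Section NonAbelianH1.
Variables (R : realType) (X : topologicalType) (G : groupType).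
Local Notation I01 := ([set x : R | 0 <= x <= 1]).
Local Notation square := (I01 `*` I01).
Local Notation is_path := (@is_path R X).
Local Notation path_homotopic := (@path_homotopic R X).
Local Notation path_concat := (@path_concat R X).
Local Notation cocycle := (@cocycle R X G).
Local Notation cohomologous := (@cohomologous R X G).

Lemma I01_0 : I01 0. Proof. by rewrite /= lexx ler01. Qed.
Lemma I01_1 : I01 1. Proof. by rewrite /= lexx ler01. Qed.

Lemma segment_closed (a b : R) : closed [set x : R | a <= x <= b].
Proof.
rewrite (_ : [set x | _] = [set x | a <= x] `&` [set x | x <= b]); first exact: closedI.
by apply/seteqP; split => x /=; [move=> /andP[] | move=> [] ? ?; apply/andP].
Qed.

Lemma affine_continuous (a b : R) : continuous (fun s : R => a + b * s).
Proof.
by move=> s; apply: cvgD; [exact: cvg_cst | apply: cvgM; [exact: cvg_cst | exact: cvg_id]].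
Qed.

Lemma interp_continuous (g1 g2 : R -> R) : continuous g1 -> continuous g2 ->
  continuous (fun z : R * R => g1 z.1 + (g2 z.1 - g1 z.1) * z.2).
Proof.
move=> c1 c2 z.
have cg1 : (g1 \o fst) @ z --> g1 z.1 by apply: cvg_comp; [exact: cvg_fst | exact: c1].
have cg2 : (g2 \o fst) @ z --> g2 z.1 by apply: cvg_comp; [exact: cvg_fst | exact: c2].
apply: cvgD; first exact: cg1.
by apply: cvgM; [exact: cvgB cg2 cg1 | exact: cvg_snd].
Qed.

Lemma segment_in (a b x y s : R) : a <= x <= b -> a <= y <= b -> 0 <= s <= 1 ->
  a <= x + (y - x) * s <= b.
Proof. by move=> /andP[? ?] /andP[? ?] /andP[? ?]; apply/andP; split; nra. Qed.

Definition broken_line (x0 x1 x2 s : R) : R :=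
  x0 + (x1 - x0) * (2 * Num.min s 2^-1) + (x2 - x1) * (2 * Num.max (s - 2^-1) 0).

Lemma broken_line_continuous x0 x1 x2 : continuous (broken_line x0 x1 x2).
Proof.
move=> s; apply: cvgD; [apply: cvgD|]; first exact: cvg_cst.
- apply: cvgM; first exact: cvg_cst; apply: cvgM; first exact: cvg_cst.
  exact: (@continuous_min R R id (fun=> 2^-1) s cvg_id (cvg_cst _)).
- apply: cvgM; first exact: cvg_cst; apply: cvgM; first exact: cvg_cst.
  exact: (@continuous_max R R (fun s => s - 2^-1) (fun=> 0) s
            (cvgB cvg_id (cvg_cst _)) (cvg_cst _)).
Qed.

Lemma broken_line0 x0 x1 x2 : broken_line x0 x1 x2 0 = x0.
Proof.
rewrite /broken_line (min_idPl _) ?invr_ge0 ?ler0n //.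
by rewrite (max_idPr _) ?sub0r ?oppr_le0 ?invr_ge0 ?ler0n //; ring.
Qed.

Lemma broken_line1 x0 x1 x2 : broken_line x0 x1 x2 1 = x2.
Proof.
have h : 2^-1 <= 1 :> R by rewrite invf_le1 ?ler1n ?ltr0n.
by rewrite /broken_line (min_idPr h) (max_idPl _) ?subr_ge0 //; field.
Qed.

Lemma broken_line_in (a b x0 x1 x2 s : R) :
  a <= x0 <= b -> a <= x1 <= b -> a <= x2 <= b -> 0 <= s <= 1 ->
  a <= broken_line x0 x1 x2 s <= b.
Proof.
move=> /andP[? ?] /andP[? ?] /andP[? ?] /andP[? ?]; rewrite /broken_line.
have h2 : (2 : R) * 2^-1 = 1 by rewrite mulfV ?pnatr_eq0.
case: (leP s 2^-1) => h.
  rewrite (max_idPr _) ?subr_le0 // mulr0 mulr0 addr0.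
  by apply/andP; split; nra.
rewrite (max_idPl _) ?subr_ge0 ?(ltW h) // mulrBr h2.
by apply/andP; split; nra.
Qed.

Definition divpt (a b : R) (m i : nat) : R := a + i%:R * ((b - a) / m%:R).

Lemma divpt0 a b m : divpt a b m 0 = a.
Proof. by rewrite /divpt mul0r addr0. Qed.

Lemma divptm a b m : (0 < m)%N -> divpt a b m m = b.
Proof. by move=> m0; rewrite /divpt; field; rewrite pnatr_eq0 -lt0n. Qed.

Lemma divpt_le a b m i j : a <= b -> (i <= j)%N -> divpt a b m i <= divpt a b m j.
Proof.
move=> ab ij; rewrite /divpt lerD2l ler_wpM2r ?ler_nat //.
by rewrite divr_ge0 ?subr_ge0.
Qed.

Lemma divpt_in a b m i : (0 < m)%N -> a <= b -> (i <= m)%N -> a <= divpt a b m i <= b.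
Proof.
move=> m0 ab im; apply/andP; split.
  by rewrite -{1}(divpt0 a b m) divpt_le.
by rewrite -[X in _ <= X](divptm a b m0) divpt_le.
Qed.

Definition tick (n k : nat) : R := divpt 0 1 n k.

Lemma tickE n k : tick n k = k%:R / n%:R.
Proof. by rewrite /tick /divpt subr0 add0r mulrA mulr1. Qed.

Lemma tick0 n : tick n 0 = 0. Proof. exact: divpt0. Qed.
Lemma tickn n : (0 < n)%N -> tick n n = 1. Proof. exact: divptm. Qed.

Lemma tick_le n i j : (i <= j)%N -> tick n i <= tick n j.
Proof. by move=> ij; rewrite divpt_le ?ler01. Qed.

Lemma tick_in n k : (0 < n)%N -> (k <= n)%N -> 0 <= tick n k <= 1.
Proof. by move=> n0 kn; rewrite divpt_in ?ler01. Qed.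

Lemma tickS n k : (0 < n)%N -> tick n k.+1 = tick n k + n%:R^-1.
Proof. by move=> n0; rewrite !tickE -addn1 natrD; field; rewrite pnatr_eq0 -lt0n. Qed.

Lemma divpt_tick n m k i : (0 < n)%N -> (0 < m)%N ->
  divpt (tick n k) (tick n k.+1) m i = tick (n * m) (k * m + i).
Proof.
move=> n0 m0; rewrite /divpt !tickE -addn1 !natrD !natrM.
by field; rewrite !pnatr_eq0 -!lt0n n0 m0.
Qed.

Lemma tick_double n k : (0 < n)%N -> 2 * tick (n + n) k = tick n k.
Proof.
by move=> n0; rewrite !tickE natrD; field; rewrite -natrD !pnatr_eq0 -!lt0n addn_gt0 n0.
Qed.

Lemma tick_double_shift n k : (0 < n)%N -> 2 * tick (n + n) (n + k) - 1 = tick n k.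
Proof.
by move=> n0; rewrite !tickE !natrD; field; rewrite -natrD !pnatr_eq0 -!lt0n addn_gt0 n0.
Qed.

Lemma tick_half n : (0 < n)%N -> tick (n + n) n = 2^-1.
Proof.
by move=> n0; rewrite !tickE natrD; field; rewrite -natrD !pnatr_eq0 -!lt0n addn_gt0 n0.
Qed.

Lemma tick_interval_I01 n k s : (k < n)%N -> tick n k <= s <= tick n k.+1 -> I01 s.
Proof.
move=> kn /andP[s1 s2]; have n0 : (0 < n)%N by apply: leq_ltn_trans kn.
have /andP[k0 _] := tick_in n0 (ltnW kn); have /andP[_ k1] := tick_in n0 kn.
by rewrite /= (le_trans k0 s1) (le_trans s2 k1).
Qed.

Lemma tick_segment_in n k s : I01 s ->
  tick n k <= tick n k + (tick n k.+1 - tick n k) * s <= tick n k.+1.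
Proof. by apply: segment_in; rewrite lexx tick_le. Qed.

(** * Paths *)

Lemma is_path_sub (W W' : set X) p : W `<=` W' -> is_path W p -> is_path W' p.
Proof. by move=> WW' [cp pW]; split => // s /pW /WW'. Qed.

Lemma is_path_ext (W : set X) (p q : R -> X) :
  is_path W p -> (forall s, I01 s -> p s = q s) -> is_path W q.
Proof.
move=> [cp pW] e; split; last by move=> s Is; rewrite -e //; apply: pW.
by apply: (subspace_eq_continuous _ cp) => s /set_mem /e.
Qed.

Lemma is_path_cst (W : set X) x : W x -> is_path W (fun=> x).
Proof. by move=> Wx; split => //; apply/continuous_subspaceT/cst_continuous. Qed.

Lemma path_homotopic_sub (W W' : set X) p q : W `<=` W' ->
  path_homotopic W p q -> path_homotopic W' p q.
Proof.
move=> WW' [pp [pq [H [cH [HW HE]]]]].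
split; first exact: is_path_sub pp.
split; first exact: is_path_sub pq.
by exists H; split => //; split => // z /HW /WW'.
Qed.

Lemma path_homotopic_ends (W : set X) p q :
  path_homotopic W p q -> p 0 = q 0 /\ p 1 = q 1.
Proof.
case=> _ [_ [H [_ [_ [_ [H1 [Hs0 Hs1]]]]]]].
have I0 := I01_0; have I1 := I01_1.
by split; [rewrite -(H1 0 I0) Hs0 | rewrite -(H1 1 I1) Hs1].
Qed.

Definition box (a b c d : R) : set (R * R) :=
  [set x : R | a <= x <= b] `*` [set y : R | c <= y <= d].

Lemma box_corners a b c d : a <= b -> c <= d ->
  [/\ box a b c d (a, c), box a b c d (b, c), box a b c d (a, d) & box a b c d (b, d)].
Proof. by move=> ab cd; do !split; rewrite /= ?lexx ?ab ?cd. Qed.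

Lemma is_path_box (W : set X) a b c d (K : R * R -> X) (g h : R -> R) :
  {within box a b c d, continuous K} -> (forall z, box a b c d z -> W (K z)) ->
  continuous g -> continuous h ->
  (forall s, I01 s -> a <= g s <= b /\ c <= h s <= d) ->
  is_path W (fun s => K (g s, h s)).
Proof.
move=> cK KW cg ch gh; split; last by move=> s /gh ?; apply: KW.
by apply: (within_comp_continuous (pair_continuous cg ch)) cK => s /gh.
Qed.

Lemma path_homotopic_box (W : set X) a b c d (K : R * R -> X) (g1 h1 g2 h2 : R -> R) :
  {within box a b c d, continuous K} -> (forall z, box a b c d z -> W (K z)) ->
  continuous g1 -> continuous h1 -> continuous g2 -> continuous h2 ->
  (forall s, I01 s -> a <= g1 s <= b /\ c <= h1 s <= d) ->
  (forall s, I01 s -> a <= g2 s <= b /\ c <= h2 s <= d) ->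
  g1 0 = g2 0 -> h1 0 = h2 0 -> g1 1 = g2 1 -> h1 1 = h2 1 ->
  path_homotopic W (fun s => K (g1 s, h1 s)) (fun s => K (g2 s, h2 s)).
Proof.
move=> cK KW cg1 ch1 cg2 ch2 gh1 gh2 e0 f0 e1 f1.
split; first exact: is_path_box cK KW cg1 ch1 gh1.
split; first exact: is_path_box cK KW cg2 ch2 gh2.
pose F z := (g1 z.1 + (g2 z.1 - g1 z.1) * z.2, h1 z.1 + (h2 z.1 - h1 z.1) * z.2).
have FB z : (I01 `*` I01) z -> box a b c d (F z).
  case: z => s t [/= Is It]; have [? ?] := gh1 s Is; have [? ?] := gh2 s Is.
  by split; apply: segment_in.
exists (K \o F); split.
  by apply: (within_comp_continuous _ FB cK); apply: pair_continuous; apply: interp_continuous.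
split; first by move=> z /FB /KW.
by split; [|split; [|split]] => ? _; rewrite /F /= -?e0 -?f0 -?e1 -?f1;
  congr (K (_, _)); ring.
Qed.

Definition segpath (K : R * R -> X) (x y x' y' : R) : R -> X :=
  fun s => K (x + (x' - x) * s, y + (y' - y) * s).

Lemma is_path_segpath (W : set X) a b c d (K : R * R -> X) x y x' y' :
  {within box a b c d, continuous K} -> (forall z, box a b c d z -> W (K z)) ->
  box a b c d (x, y) -> box a b c d (x', y') -> is_path W (segpath K x y x' y').
Proof.
move=> cK KW [/= ? ?] [/= ? ?].
apply: (is_path_box cK KW (affine_continuous (a := x) (b := x' - x))
                           (affine_continuous (a := y) (b := y' - y))).
by move=> s Is; split; apply: segment_in.
Qed.

Lemma path_concat_l (p q : R -> X) s : s <= 2^-1 -> path_concat p q s = p (2 * s).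
Proof. by move=> h; rewrite /path_concat h. Qed.

Lemma path_concat_r (p q : R -> X) s : p 1 = q 0 -> 2^-1 <= s ->
  path_concat p q s = q (2 * s - 1).
Proof.
move=> e h; rewrite /path_concat; case: ifP => // h'.
have -> : s = 2^-1 by apply/eqP; rewrite eq_le h' h.
by rewrite mulfV ?pnatr_eq0 // subrr.
Qed.

Lemma path_concat0 (p q : R -> X) : path_concat p q 0 = p 0.
Proof. by rewrite path_concat_l ?mulr0 // invr_ge0 ler0n. Qed.

Lemma path_concat1 (p q : R -> X) : p 1 = q 0 -> path_concat p q 1 = q 1.
Proof.
move=> e; rewrite path_concat_r //; last by rewrite invf_le1 ?ler1n ?ltr0n.
by congr q; rewrite mulr1 (_ : 2 = 1 + 1) // addrK.
Qed.

Lemma path_concat_continuous (p q : R -> X) : {within I01, continuous p} ->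
  {within I01, continuous q} -> p 1 = q 0 ->
  {within I01, continuous (path_concat p q)}.
Proof.
move=> cp cq e.
have -> : I01 = [set x : R | 0 <= x <= 2^-1] `|` [set x : R | 2^-1 <= x <= 1].
  apply/seteqP; split => x /=.
    by move=> /andP[? ?]; case: (leP x 2^-1) => h; [left | right];
      apply/andP; split => //; exact: ltW.
  by case=> /andP[? ?]; apply/andP; split; lra.
apply: withinU_continuous; try exact: segment_closed.
  apply: (subspace_eq_continuous (f := p \o (fun s => 0 + 2 * s))).
    by move=> s /set_mem /= /andP[_ s1]; rewrite /from_subspace /= path_concat_l // add0r.
  by apply: (within_comp_continuous (affine_continuous (a := 0) (b := 2))) cp => s /andP[? ?] /=;
    apply/andP; split; lra.
apply: (subspace_eq_continuous (f := q \o (fun s => -1 + 2 * s))).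
  by move=> s /set_mem /= /andP[s0 _]; rewrite /from_subspace /= path_concat_r // addrC.
by apply: (within_comp_continuous (affine_continuous (a := -1) (b := 2))) cq => s /andP[? ?] /=;
  apply/andP; split; lra.
Qed.

Lemma path_concat_segpath (K : R * R -> X) x0 y0 x1 y1 x2 y2 :
  path_concat (segpath K x0 y0 x1 y1) (segpath K x1 y1 x2 y2) =
  (fun s => K (broken_line x0 x1 x2 s, broken_line y0 y1 y2 s)).
Proof.
apply: funext => s; rewrite /path_concat /segpath /broken_line.
case: leP => h.
  by rewrite (max_idPr _) ?subr_le0 //; congr (K (_, _)); ring.
by rewrite (max_idPl _) ?subr_ge0 ?(ltW h) //; congr (K (_, _)); field.
Qed.

(* The restriction of p to [a, b], reparametrized by [0, 1]. *)
Definition subpath (p : R -> X) (a b : R) : R -> X := segpath (p \o fst) a 0 b 0.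

Lemma subpath01 p : subpath p 0 1 = p.
Proof. by apply: funext => s; rewrite /subpath /segpath /=; congr p; ring. Qed.

Lemma fst_comp_continuous (p : R -> X) a b c d : {within I01, continuous p} ->
  0 <= a -> b <= 1 -> {within box a b c d, continuous (p \o fst)}.
Proof.
move=> cp a0 b1; apply: (within_comp_continuous _ _ cp) => [z|z [/= /andP[? ?] _]].
  exact: cvg_fst.
by apply/andP; split; lra.
Qed.

Lemma is_path_subpath (W : set X) (p : R -> X) a b : {within I01, continuous p} ->
  0 <= a -> a <= b -> b <= 1 -> (forall s, a <= s <= b -> W (p s)) ->
  is_path W (subpath p a b).
Proof.
move=> cp a0 ab b1 pW.
apply: (is_path_segpath (a := a) (b := b) (c := 0) (d := 0)).
- exact: fst_comp_continuous.
- by move=> z [/= ? _]; apply: pW.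
- by split; rewrite /= ?lexx ?ab.
- by split; rewrite /= ?lexx ?ab.
Qed.

(** * Cocycles on paths in a rectangle *)

Lemma cocycle_sub (W W' Y Y' : set X) u : W `<=` W' ->
  W `&` Y `<=` W' `&` Y' -> cocycle W' Y' u -> cocycle W Y u.
Proof.
move=> WW' WY [u1 [uh uc]]; split; first by move=> p pY; apply/u1/(is_path_sub WY).
split; first by move=> p q h; apply/uh/(path_homotopic_sub WW').
by move=> p q pp pq e; apply: uc => //; apply: is_path_sub WW' _.
Qed.

Lemma cohomologous_sub (W W' Y Y' : set X) u v : W `<=` W' ->
  W `&` Y `<=` W' `&` Y' -> cohomologous W' Y' u v -> cohomologous W Y u v.
Proof.
move=> WW' WY [c [c1 h]]; exists c; split; last by move=> p /(is_path_sub WW') /h.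
by move=> x Wx Yx; have [? ?] := WY x (conj Wx Yx); apply: c1.
Qed.

Section Cocycle.
Variables (W Y : set X) (u : (R -> X) -> G).
Hypothesis cu : cocycle W Y u.

Lemma cocycle_ext (p q : R -> X) :
  is_path W p -> (forall s, I01 s -> p s = q s) -> u p = u q.
Proof.
move=> pp pq; have [cp pW] := pp; have [_ [uh _]] := cu; apply: uh.
split=> //; split; first exact: is_path_ext pp pq.
exists (p \o fst); split.
  by apply: (within_comp_continuous _ _ cp) => [z|z []]; [exact: cvg_fst|].
split; first by move=> z [? _]; apply: pW.
by do 2 (split; first by move=> s Is; rewrite /= ?pq).
Qed.

Section Box.
Variables (a b c d : R) (K : R * R -> X).
Hypotheses (cK : {within box a b c d, continuous K})
           (KW : forall z, box a b c d z -> W (K z)).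

Lemma cocycle_segpath_cst x y : box a b c d (x, y) -> u (segpath K x y x y) = one.
Proof.
move=> bxy; have [_ [_ uc]] := cu; have P := is_path_segpath cK KW bxy bxy.
apply: (mulgI (u (segpath K x y x y))); rewrite mulg1 -uc //.
  by congr u; apply: funext => s; rewrite /path_concat /segpath; case: ifP => _;
    congr (K (_, _)); ring.
by rewrite /segpath; congr (K (_, _)); ring.
Qed.

(* Both sides are values on two-edge paths with the same ends in the convex box, which
   are homotopic there. *)
Lemma cocycle_box x0 y0 x1 y1 x2 y2 q r :
  box a b c d (x0, y0) -> box a b c d (x1, y1) -> box a b c d (x2, y2) ->
  box a b c d (q, r) ->
  mul (u (segpath K x0 y0 x1 y1)) (u (segpath K x1 y1 x2 y2)) =
  mul (u (segpath K x0 y0 q r)) (u (segpath K q r x2 y2)).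
Proof.
move=> b0 b1 b2 bq; have [_ [uh uc]] := cu.
have ends x y x' y' x'' y'' : segpath K x y x' y' 1 = segpath K x' y' x'' y'' 0.
  by rewrite /segpath; congr (K (_, _)); ring.
rewrite -!uc ?ends //; try exact: is_path_segpath.
rewrite !path_concat_segpath; apply: uh.
move: b0 b1 b2 bq => [/= ? ?] [/= ? ?] [/= ? ?] [/= ? ?].
apply: (path_homotopic_box cK KW); rewrite ?broken_line0 ?broken_line1 //;
  try exact: broken_line_continuous.
all: by move=> s Is; split; apply: broken_line_in.
Qed.

End Box.

Lemma cocycle_subpath_split (p : R -> X) a b c : {within I01, continuous p} ->
  0 <= a -> a <= b -> b <= c -> c <= 1 -> (forall s, a <= s <= c -> W (p s)) ->
  u (subpath p a c) = mul (u (subpath p a b)) (u (subpath p b c)).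
Proof.
move=> cp a0 ab bc c1 pW.
have cK := fst_comp_continuous (c := 0) (d := 0) cp a0 c1.
have KW z : box a c 0 0 z -> W ((p \o fst) z) by case: z => [? ?] [/= ? _]; apply: pW.
have bx x : a <= x <= c -> box a c 0 0 (x, 0) by move=> ?; split; rewrite //= lexx.
have ac : a <= c := le_trans ab bc.
rewrite (cocycle_box cK KW (bx a _) (bx b _) (bx c _) (bx c _)) ?lexx ?ab ?bc ?ac //.
by rewrite (cocycle_segpath_cst cK KW (bx c _)) ?lexx ?ac // mulg1.
Qed.

Lemma cocycle_subpath_divpt (p : R -> X) a b m : {within I01, continuous p} ->
  (0 < m)%N -> 0 <= a -> a <= b -> b <= 1 -> (forall s, a <= s <= b -> W (p s)) ->
  u (subpath p a b) =
  (\prod_(0 <= i < m) u (subpath p (divpt a b m i) (divpt a b m i.+1)))%g.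
Proof.
move=> cp m0 a0 ab b1 pW.
suff H k : (k <= m)%N -> u (subpath p a (divpt a b m k)) =
  (\prod_(0 <= i < k) u (subpath p (divpt a b m i) (divpt a b m i.+1)))%g.
  by rewrite -H // divptm.
elim: k => [_|k IH km].
  have cK := fst_comp_continuous (c := 0) (d := 0) cp a0 b1.
  rewrite big_geq // divpt0 (cocycle_segpath_cst cK) //.
    by move=> z [/= ? _]; apply: pW.
  by split; rewrite /= ?lexx ?ab.
have /andP[? ?] := divpt_in m0 ab (ltnW km).
have /andP[? ?] := divpt_in m0 ab km.
rewrite big_nat_recr //= -IH ?(ltnW km) //; apply: cocycle_subpath_split => //.
- by rewrite divpt_le.
- by apply: le_trans b1.
- by move=> s /andP[? ?]; apply: pW; apply/andP; split; lra.
Qed.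

End Cocycle.

(** * Lebesgue number of an open cover of the square *)

Lemma nbhs_square (x : R * R) (S : set (R * R)) : nbhs x S ->
  exists2 e : R, 0 < e & forall w, `|x.1 - w.1| < e -> `|x.2 - w.2| < e -> S w.
Proof.
case=> -[A B] /= [/nbhs_ballP[e1 e1p h1] /nbhs_ballP[e2 e2p h2]] AB.
exists (Num.min e1 e2) => [|w w1 w2]; first by rewrite lt_min e1p e2p.
apply: AB; split; [apply: h1 | apply: h2]; rewrite -ball_normE /ball_ /=.
  by apply: lt_le_trans w1 _; rewrite ge_min lexx.
by apply: lt_le_trans w2 _; rewrite ge_min lexx orbT.
Qed.

Lemma nbhs_square_near (x : R * R) (e : R) : 0 < e ->
  nbhs x [set w : R * R | `|x.1 - w.1| < e /\ `|x.2 - w.2| < e].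
Proof.
move=> e0; exists ([set w | `|x.1 - w| < e], [set w | `|x.2 - w| < e]) => /=; last by move=> w [].
by split; apply/nbhs_ballP; exists e => //= w; rewrite -ball_normE.
Qed.

Lemma lebesgue_number_square (U V : set X) (H : R * R -> X) :
  open U -> open V -> U `|` V = setT -> {within square, continuous H} ->
  exists N : nat, forall z, square z ->
    let near_z w := square w /\ `|z.1 - w.1| <= N.+1%:R^-1 /\ `|z.2 - w.2| <= N.+1%:R^-1 in
    (forall w, near_z w -> U (H w)) \/ (forall w, near_z w -> V (H w)).
Proof.
move=> oU oV UV cH.
have cpt : compact square.
  by have := compact_setX (@segment_compact R 0 1) (@segment_compact R 0 1); rewrite set_itvcc.
pose Q (O : set X) (i : nat) (z : R * R) := forall w, square w ->
  `|z.1 - w.1| <= i.+1%:R^-1 -> `|z.2 - w.2| <= i.+1%:R^-1 -> O (H w).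
have nearQ x O : square x -> open O -> O (H x) ->
    \forall x' \near x & i \near \oo, square x' -> Q O i x'.
  move=> sx oO Ox.
  have := (subspace_continuousP _ _).1 cH x sx O (open_nbhs_nbhs (conj oO Ox)).
  rewrite /= nbhs_simpl /within => /nbhs_square[e e0 he].
  exists ([set x' | `|x.1 - x'.1| < e / 2 /\ `|x.2 - x'.2| < e / 2],
          [set i : nat | i.+1%:R^-1 < e / 2]).
    split; first exact/nbhs_square_near/divr_gt0.
    by have := near_infty_natSinv_lt (PosNum (divr_gt0 e0 (ltr0n R 2))).
  move=> [x' i] [/= [h1 h2] hi] _ w sw w1 w2.
  apply: (he w) => //; rewrite (splitr e).
    by apply: le_lt_trans (ler_distD x'.1 _ _) _; apply: ltrD h1 (le_lt_trans w1 hi).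
  by apply: le_lt_trans (ler_distD x'.2 _ _) _; apply: ltrD h2 (le_lt_trans w2 hi).
have cover x : square x ->
    \forall x' \near x & i \near \oo, square x' -> Q U i x' \/ Q V i x'.
  move=> sx; have : (U `|` V) (H x) by rewrite UV.
  by case=> [/(nearQ x U sx oU)|/(nearQ x V sx oV)]; apply: filterS => -[? ?] /= h /h;
    [left | right].
have [N hN] := filter_ex ((near_covering_withinP square).2
  ((compact_near_coveringP square).1 cpt) nat \oo _ _ cover).
exists N => z sz; case: (hN z sz) => h; [left | right] => w [sw [w1 w2]]; exact: h.
Qed.

Lemma lebesgue_grid (U V : set X) (H : R * R -> X) :
  open U -> open V -> U `|` V = setT -> {within square, continuous H} ->
  exists2 n, (0 < n)%N & forall k j, (k < n)%N -> (j < n)%N ->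
    let B := box (tick n k) (tick n k.+1) (tick n j) (tick n j.+1) in
    (forall z, B z -> U (H z)) \/ (forall z, B z -> V (H z)).
Proof.
move=> oU oV UV cH; have [N hN] := lebesgue_number_square oU oV UV cH.
apply: (ex_intro2 _ _ N.+1) => // k j kn jn B.
have tick_bounds i : (i < N.+1)%N -> 0 <= tick N.+1 i :> R /\ tick N.+1 i.+1 <= 1 :> R.
  by move=> iN; rewrite (andP (tick_in (ltn0Sn N) (ltnW iN))).1 (andP (tick_in (ltn0Sn N) iN)).2.
have [k0 k1] := tick_bounds k kn; have [j0 j1] := tick_bounds j jn.
have sB z : B z -> square z /\ `|tick N.+1 k - z.1| <= N.+1%:R^-1 /\
    `|tick N.+1 j - z.2| <= N.+1%:R^-1.
  case: z => z1 z2 [/= /andP[a1 a2] /andP[b1 b2]].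
  rewrite !tickS // in k1 j1 a2 b2.
  rewrite distrC ger0_norm ?subr_ge0 // distrC ger0_norm ?subr_ge0 //.
  split; first by rewrite /= (le_trans k0 a1) (le_trans a2 k1) (le_trans j0 b1) (le_trans b2 j1).
  by split; rewrite lerBlDl.
have scorner : square (tick N.+1 k, tick N.+1 j) by split; apply: tick_in => //; apply: ltnW.
by case: (hN _ scorner) => h; [left | right] => z /sB; apply: h.
Qed.

(** * Gluing two cocycles along an open cover *)

Section Glue.
Variables (U V Y : set X) (uU uV : (R -> X) -> G).
Hypotheses (oU : open U) (oV : open V) (UV : U `|` V = setT).
Hypotheses (cU : cocycle U Y uU) (cV : cocycle V Y uV).
Hypothesis agree : forall p, is_path (U `&` V) p -> uU p = uV p.

Definition patch (q : R -> X) : G :=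
  if pselect (forall s, I01 s -> U (q s)) then uU q else uV q.

Lemma patch_U q : is_path U q -> patch q = uU q.
Proof. by case=> cq qU; rewrite /patch; case: pselect. Qed.

Lemma patch_V q : is_path V q -> patch q = uV q.
Proof.
move=> [cq qV]; rewrite /patch; case: pselect => // qU.
by apply: agree; split => // s Is; split; [apply: qU | apply: qV].
Qed.

Lemma patch_local (T : Type) (B : set T) (f : T -> X) :
  (forall t, B t -> U (f t)) \/ (forall t, B t -> V (f t)) ->
  exists W (uW : (R -> X) -> G),
    [/\ cocycle W Y uW, forall q, is_path W q -> patch q = uW q & forall t, B t -> W (f t)].
Proof.
by case=> fB; [exists U, uU; split=> //; apply: patch_U | exists V, uV; split=> //; apply: patch_V].
Qed.

Definition subordinate (p : R -> X) (n : nat) : Prop := (0 < n)%N /\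
  forall k, (k < n)%N -> (forall s, tick n k <= s <= tick n k.+1 -> U (p s)) \/
                         (forall s, tick n k <= s <= tick n k.+1 -> V (p s)).

Definition piece (p : R -> X) n k := subpath p (tick n k) (tick n k.+1).

Definition patch_prod (p : R -> X) n := (\prod_(0 <= k < n) patch (piece p n k))%g.

(* Any subordinate subdivision gives the same value (glue_eq); the junk default 1 is
   only used when p is not a path. *)
Definition glue (p : R -> X) := patch_prod p (xget 1%N (subordinate p)).

Lemma is_path_piece (W : set X) p n k : {within I01, continuous p} -> (k < n)%N ->
  (forall s, tick n k <= s <= tick n k.+1 -> W (p s)) -> is_path W (piece p n k).
Proof.
move=> cp kn pW; have n0 : (0 < n)%N by apply: leq_ltn_trans kn.
have /andP[? _] := tick_in n0 (ltnW kn); have /andP[_ ?] := tick_in n0 kn.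
by apply: is_path_subpath => //; apply: tick_le.
Qed.

Lemma subordinate_mul p n m : subordinate p n -> (0 < m)%N -> subordinate p (n * m).
Proof.
move=> [n0 pn] m0; split => [|j jnm]; first by rewrite muln_gt0 n0.
have ej : j = (j %/ m * m + j %% m)%N by apply: divn_eq.
have kn : (j %/ m < n)%N by rewrite ltn_divLR.
have im : (j %% m < m)%N by rewrite ltn_pmod.
have ab : tick n (j %/ m) <= tick n (j %/ m).+1 :> R by apply: tick_le.
have /andP[a1 _] := divpt_in m0 ab (ltnW im); have /andP[_ b2] := divpt_in m0 ab im.
rewrite ej -addnS -!divpt_tick //.
by case: (pn _ kn) => h; [left | right] => s /andP[s1 s2]; apply: h;
  rewrite (le_trans a1 s1) (le_trans s2 b2).
Qed.

Lemma patch_piece_refine p n m k : {within I01, continuous p} ->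
  subordinate p n -> (0 < m)%N -> (k < n)%N ->
  patch (piece p n k) = (\prod_(0 <= i < m) patch (piece p (n * m) (k * m + i)))%g.
Proof.
move=> cp [n0 pn] m0 kn.
have [W [uW [cW patchW pW]]] := patch_local (pn k kn).
have ab : tick n k <= tick n k.+1 :> R by apply: tick_le.
have /andP[a0 _] := tick_in n0 (ltnW kn); have /andP[_ b1] := tick_in n0 kn.
rewrite patchW; last exact: is_path_piece.
rewrite /piece (cocycle_subpath_divpt cW cp m0 a0 ab b1 pW).
apply: eq_big_nat => i /andP[_ im].
have /andP[? ?] := divpt_in m0 ab (ltnW im); have /andP[? ?] := divpt_in m0 ab im.
rewrite /piece -addnS -!divpt_tick // patchW //; apply: is_path_subpath => //.
- exact: le_trans a0 _.
- by apply: divpt_le.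
- exact: le_trans b1.
- by move=> s /andP[? ?]; apply: pW; apply/andP; split; lra.
Qed.

Lemma patch_prod_mul p n m : {within I01, continuous p} -> subordinate p n -> (0 < m)%N ->
  patch_prod p n = patch_prod p (n * m).
Proof.
move=> cp pn m0; rewrite /patch_prod prod_nat_mul.
by apply: eq_big_nat => k /andP[_ kn]; apply: patch_piece_refine.
Qed.

Lemma glue_eq p n : {within I01, continuous p} -> subordinate p n -> glue p = patch_prod p n.
Proof.
move=> cp pn; have pN : subordinate p (xget 1%N (subordinate p)) := xgetPex 1%N (ex_intro _ n pn).
by rewrite /glue (patch_prod_mul cp pN pn.1) (patch_prod_mul cp pn pN.1) mulnC.
Qed.

Lemma exists_subordinate p : {within I01, continuous p} -> exists n, subordinate p n.
Proof.
move=> cp; have cH : {within I01 `*` I01, continuous (p \o fst)}.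
  by apply: fst_comp_continuous; rewrite ?ler01 ?lexx.
have [n n0 hn] := lebesgue_grid oU oV UV cH.
exists n; split => // k kn.
have B s : tick n k <= s <= tick n k.+1 ->
    box (tick n k) (tick n k.+1) (tick n 0) (tick n 1) (s, tick n 0).
  by move=> ?; split; rewrite //= lexx tick_le.
by case: (hn k 0%N kn n0) => h; [left | right] => s /B /h.
Qed.

Lemma glue_local p : (forall s, I01 s -> U (p s)) \/ (forall s, I01 s -> V (p s)) ->
  {within I01, continuous p} -> glue p = patch p.
Proof.
move=> pUV cp; have t10 : tick 1 0 = 0 :> R by rewrite tick0.
have t11 : tick 1 1 = 1 :> R by rewrite tickn.
have p1 : subordinate p 1 by split=> // k; rewrite ltnS leqn0 => /eqP ->; rewrite t10 t11.
by rewrite (glue_eq cp p1) /patch_prod big_nat1 /piece t10 t11 subpath01.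
Qed.

Lemma glue_U p : is_path U p -> glue p = uU p.
Proof. by move=> pU; rewrite glue_local ?patch_U //; [left; apply: pU.2 | apply: pU.1]. Qed.

Lemma glue_V p : is_path V p -> glue p = uV p.
Proof. by move=> pV; rewrite glue_local ?patch_V //; [right; apply: pV.2 | apply: pV.1]. Qed.

Lemma patch_ext q1 q2 : is_path U q1 \/ is_path V q1 ->
  (forall s, I01 s -> q1 s = q2 s) -> patch q1 = patch q2.
Proof.
case=> q1W e; have q2W := is_path_ext q1W e.
  by rewrite !patch_U // (cocycle_ext cU q1W e).
by rewrite !patch_V // (cocycle_ext cV q1W e).
Qed.

Lemma subordinate_piece p n k : {within I01, continuous p} -> subordinate p n ->
  (k < n)%N -> is_path U (piece p n k) \/ is_path V (piece p n k).
Proof. by move=> cp [_ pn] kn; case: (pn k kn) => h; [left | right]; apply: is_path_piece. Qed.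

Lemma glue_ext p q : {within I01, continuous p} -> (forall s, I01 s -> p s = q s) ->
  glue p = glue q.
Proof.
move=> cp e; have [n [n0 pn]] := exists_subordinate cp.
have cq : {within I01, continuous q} by apply: (subspace_eq_continuous _ cp) => s /set_mem /e.
have qn : subordinate q n.
  split=> // k kn; case: (pn k kn) => h; [left | right] => s hs;
    by rewrite -e; [apply: h | apply: tick_interval_I01 kn hs].
rewrite (glue_eq cp (conj n0 pn)) (glue_eq cq qn).
apply: eq_big_nat => k /andP[_ kn]; apply: patch_ext; first exact: subordinate_piece.
by move=> s Is; apply/e/(tick_interval_I01 kn)/tick_segment_in.
Qed.

Lemma subordinate_concat p q n : subordinate p n -> subordinate q n ->
  p 1 = q 0 -> subordinate (path_concat p q) (n + n).
Proof.
move=> [n0 pn] [_ qn] e; split=> [|k]; first by rewrite addn_gt0 n0.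
case: (ltnP k n) => [kn _|nk].
  have k1 : tick (n + n) k.+1 <= 2^-1 :> R by rewrite -(tick_half n0) tick_le.
  case: (pn k kn) => h; [left | right] => s /andP[s1 s2];
    rewrite path_concat_l ?(le_trans s2 k1) //; apply: h;
    by rewrite -(tick_double _ n0) -(tick_double k.+1 n0) !ler_pM2l ?ltr0n ?s1.
rewrite -(subnKC nk) ltn_add2l => jn.
have k1 : 2^-1 <= tick (n + n) (n + (k - n)) :> R by rewrite -(tick_half n0) tick_le ?leq_addr.
case: (qn _ jn) => h; [left | right] => s /andP[s1 s2];
  rewrite path_concat_r ?(le_trans k1 s1) //; apply: h;
  by rewrite -(tick_double_shift _ n0) -(tick_double_shift (k - n).+1 n0) addnS
    !lerD2r !ler_pM2l ?ltr0n ?s1.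
Qed.

Lemma piece_concat_l p q n k s : (0 < n)%N -> (k < n)%N -> I01 s ->
  piece (path_concat p q) (n + n) k s = piece p n k s.
Proof.
move=> n0 kn Is; have k1 : tick (n + n) k.+1 <= 2^-1 :> R by rewrite -(tick_half n0) tick_le.
rewrite /piece /subpath /segpath /= path_concat_l; last first.
  by apply: le_trans k1; case/andP: (tick_segment_in (n + n) k Is).
by congr p; rewrite mulrDr mulrA mulrBr !tick_double.
Qed.

Lemma piece_concat_r p q n j s : (0 < n)%N -> p 1 = q 0 -> I01 s ->
  piece (path_concat p q) (n + n) (n + j) s = piece q n j s.
Proof.
move=> n0 e Is; have k1 : 2^-1 <= tick (n + n) (n + j) :> R.
  by rewrite -(tick_half n0) tick_le ?leq_addr.
rewrite /piece /subpath /segpath /= path_concat_r //; last first.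
  by apply: le_trans k1 _; case/andP: (tick_segment_in (n + n) (n + j) Is).
congr q; rewrite -(tick_double_shift j n0) -(tick_double_shift j.+1 n0) addnS; ring.
Qed.

Lemma glue_concat p q : {within I01, continuous p} -> {within I01, continuous q} ->
  p 1 = q 0 -> glue (path_concat p q) = (glue p * glue q)%g.
Proof.
move=> cp cq e; have [n1 p1] := exists_subordinate cp; have [n2 q2] := exists_subordinate cq.
have pN := subordinate_mul p1 q2.1.
have qN : subordinate q (n1 * n2) by rewrite mulnC; apply: subordinate_mul q2 p1.1.
have N0 := pN.1.
rewrite (glue_eq (path_concat_continuous cp cq e) (subordinate_concat pN qN e)).
rewrite (glue_eq cp pN) (glue_eq cq qN) /patch_prod prod_nat_add.
congr (_ * _)%g; apply: eq_big_nat => k /andP[_ kN]; symmetry; apply: patch_ext.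
- exact: subordinate_piece.
- by move=> s Is; rewrite piece_concat_l.
- exact: subordinate_piece.
- by move=> s Is; rewrite piece_concat_r.
Qed.

Definition row (H : R * R -> X) (t : R) : R -> X := fun s => H (s, t).

Lemma row_continuous H t : {within square, continuous H} -> I01 t ->
  {within I01, continuous (row H t)}.
Proof.
move=> cH It; apply: (within_comp_continuous _ _ cH) => [|s Is]; last by split.
by apply: pair_continuous => x; [exact: cvg_id | exact: cvg_cst].
Qed.

Lemma patch_segpath_vertical a b c d K x y y' : {within box a b c d, continuous K} ->
  (forall z, box a b c d z -> U (K z)) \/ (forall z, box a b c d z -> V (K z)) ->
  box a b c d (x, y) -> box a b c d (x, y') ->
  (forall t, c <= t <= d -> K (x, t) = K (x, y)) -> patch (segpath K x y x y') = one.
Proof.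
move=> cK KUV bxy bxy' Kx; have [W [uW [cW patchW KW]]] := patch_local KUV.
have P := is_path_segpath cK KW bxy bxy'.
rewrite patchW // -(cocycle_segpath_cst cW cK KW bxy); apply: (cocycle_ext cW P).
move: bxy bxy' => [/= _ ?] [/= _ ?] s Is.
by rewrite /segpath !subrr !mul0r !addr0 Kx //; apply: segment_in.
Qed.

Lemma patch_box a b c d K x0 y0 x1 y1 x2 y2 q r : {within box a b c d, continuous K} ->
  (forall z, box a b c d z -> U (K z)) \/ (forall z, box a b c d z -> V (K z)) ->
  box a b c d (x0, y0) -> box a b c d (x1, y1) -> box a b c d (x2, y2) ->
  box a b c d (q, r) ->
  mul (patch (segpath K x0 y0 x1 y1)) (patch (segpath K x1 y1 x2 y2)) =
  mul (patch (segpath K x0 y0 q r)) (patch (segpath K q r x2 y2)).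
Proof.
move=> cK KUV b0 b1 b2 bq; have [W [uW [cW patchW KW]]] := patch_local KUV.
have P := is_path_segpath cK KW.
by rewrite !patchW; try apply: P; rewrite ?(cocycle_box cW cK KW b0 b1 b2 bq).
Qed.

Section Homotopy.
Variables (H : R * R -> X) (n : nat).
Hypotheses (cH : {within square, continuous H}) (n0 : (0 < n)%N).
Hypothesis grid : forall k j, (k < n)%N -> (j < n)%N ->
  let B := box (tick n k) (tick n k.+1) (tick n j) (tick n j.+1) in
  (forall z, B z -> U (H z)) \/ (forall z, B z -> V (H z)).
Hypotheses (H0 : forall t, I01 t -> H (0, t) = H (0, 0))
           (H1 : forall t, I01 t -> H (1, t) = H (1, 0)).

Lemma grid_continuous k j : (k < n)%N -> (j < n)%N ->
  {within box (tick n k) (tick n k.+1) (tick n j) (tick n j.+1), continuous H}.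
Proof.
move=> kn jn; apply: continuous_subspaceW cH => -[z1 z2] [/= kz jz].
by split; [exact: tick_interval_I01 kn kz | exact: tick_interval_I01 jn jz].
Qed.

Lemma piece_row t k : piece (row H t) n k = segpath H (tick n k) t (tick n k.+1) t.
Proof.
by apply: funext => s; rewrite /piece /subpath /segpath /row /=; congr (H (_, _)); ring.
Qed.

Lemma subordinate_row j t : (j < n)%N -> tick n j <= t <= tick n j.+1 ->
  subordinate (row H t) n.
Proof.
move=> jn jt; split=> // k kn.
by case: (grid kn jn) => h; [left | right] => s hs; apply: h.
Qed.

Lemma patch_row_vertical k j x : (k < n)%N -> (j < n)%N ->
  tick n k <= x <= tick n k.+1 -> (forall t, I01 t -> H (x, t) = H (x, 0)) ->
  patch (segpath H x (tick n j) x (tick n j.+1)) = one.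
Proof.
move=> kn jn xk Hx; have jj := tick_le n (leqnSn j).
apply: (patch_segpath_vertical (grid_continuous kn jn) (grid kn jn)).
- by split; rewrite //= lexx jj.
- by split; rewrite //= lexx jj.
- by move=> t ht; rewrite (Hx t (tick_interval_I01 jn ht)) (Hx _ (tick_in n0 (ltnW jn))).
Qed.

Lemma glue_row_step j : (j < n)%N -> glue (row H (tick n j)) = glue (row H (tick n j.+1)).
Proof.
move=> jn; have jj := tick_le n (leqnSn j).
rewrite (glue_eq (row_continuous cH (tick_in n0 (ltnW jn))) (subordinate_row jn _));
  last by rewrite lexx jj.
rewrite (glue_eq (row_continuous cH (tick_in n0 jn)) (subordinate_row jn _));
  last by rewrite lexx jj.
pose b k := patch (segpath H (tick n k) (tick n j) (tick n k) (tick n j.+1)).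
have b0 : b 0%N = one.
  apply: (patch_row_vertical n0 jn); first by rewrite lexx tick_le.
  by rewrite tick0; apply: H0.
have bn : b n = one.
  apply: (patch_row_vertical (k := n.-1) _ jn); rewrite ?prednK ?ltn_predL //.
    by rewrite lexx tick_le ?leq_pred.
  by rewrite tickn //; apply: H1.
have := prod_telescope (n := n) (b := b)
  (a := fun k => patch (piece (row H (tick n j)) n k))
  (c := fun k => patch (piece (row H (tick n j.+1)) n k)).
rewrite b0 bn mulg1 mul1g; apply=> k kn; rewrite !piece_row.
have [c00 c10 c01 c11] := box_corners (tick_le n (leqnSn k)) jj.
exact: (patch_box (grid_continuous kn jn) (grid kn jn)).
Qed.

End Homotopy.

Lemma glue_homotopic p q : path_homotopic setT p q -> glue p = glue q.
Proof.
case=> [[cp _] [[cq _] [H [cH [_ [Hp [Hq [H0 H1]]]]]]]].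
have [n n0 grid] := lebesgue_grid oU oV UV cH.
have H0' t : I01 t -> H (0, t) = H (0, 0) by move=> It; rewrite (H0 t It) (H0 0 I01_0).
have H1' t : I01 t -> H (1, t) = H (1, 0) by move=> It; rewrite (H1 t It) (H1 0 I01_0).
have -> : glue p = glue (row H (tick n 0)).
  by apply: glue_ext => // s Is; rewrite /row tick0 Hp.
have -> : glue q = glue (row H (tick n n)).
  by apply: glue_ext => // s Is; rewrite /row tickn // Hq.
suff IH j : (j <= n)%N -> glue (row H (tick n 0)) = glue (row H (tick n j)) by apply: IH.
elim: j => [//|j IH jn].
by rewrite IH ?(ltnW jn) //; apply: (glue_row_step cH n0 grid H0' H1').
Qed.

Lemma glue_cocycle : Y `<=` U -> cocycle setT Y glue.
Proof.
move=> YU; split.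
  move=> p [cp pY]; have [c1 _] := cU.
  have pU : is_path U p by split=> // s /pY [_ /YU].
  by rewrite glue_U //; apply: c1; split=> // s /pY [_ Yp]; split=> //; apply: YU.
split; first by move=> p q; apply: glue_homotopic.
by move=> p q [cp _] [cq _] e; apply: glue_concat.
Qed.

End Glue.

(** * The Mayer-Vietoris square *)

Definition cochain_act (c : X -> G) (u : (R -> X) -> G) : (R -> X) -> G :=
  fun p => mul (mul (c (p 0)) (u p)) (inv (c (p 1))).

Lemma cocycle_restrict (W W' Y : set X) u : W `<=` W' -> cocycle W' Y u -> cocycle W Y u.
Proof. by move=> WW'; apply: cocycle_sub => // x [/WW' ? ?]. Qed.

Lemma cohomologous_restrict (W W' Y : set X) u v :
  W `<=` W' -> cohomologous W' Y u v -> cohomologous W Y u v.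
Proof. by move=> WW'; apply: cohomologous_sub => // x [/WW' ? ?]. Qed.

Lemma cohomologous_eq (W Y : set X) u v :
  (forall p, is_path W p -> u p = v p) -> cohomologous W Y u v.
Proof. by move=> uv; exists (fun=> one); split=> // p /uv ->; rewrite mul1g invg1 mulg1. Qed.

Lemma cocycle_prod_pieces (W Y : set X) u p n : cocycle W Y u -> is_path W p ->
  (0 < n)%N -> u p = (\prod_(0 <= k < n) u (piece p n k))%g.
Proof.
move=> cu [cp pW] n0.
by rewrite -{1}(subpath01 p) (cocycle_subpath_divpt cu cp n0) ?lexx ?ler01 // => s /pW.
Qed.

Lemma cohomologous_of_cover (U V Y : set X) u v (cu cv : X -> G) :
  open U -> open V -> U `|` V = setT -> Y `<=` U ->
  cocycle setT Y u -> cocycle setT Y v -> cochain0 U Y cu ->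
  (forall p, is_path U p -> v p = cochain_act cu u p) ->
  (forall p, is_path V p -> v p = cochain_act cv u p) ->
  (forall x, U x -> V x -> cu x = cv x) ->
  cohomologous setT Y u v.
Proof.
move=> oU oV UV YU cu_ cv_ c0U hU hV cUV.
pose c x := if pselect (U x) then cu x else cv x.
have cU x : U x -> c x = cu x by rewrite /c; case: pselect.
have cV x : V x -> c x = cv x by rewrite /c; case: pselect => // Ux Vx; apply: cUV.
exists c; split=> [x _ Yx|p pX]; first by rewrite cU ?c0U //; apply: YU.
have [n [n0 pn]] := exists_subordinate oU oV UV pX.1.
rewrite (cocycle_prod_pieces cv_ pX n0) (cocycle_prod_pieces cu_ pX n0).
apply: (mulIg (c (p 1))); rewrite mulgVK -(tickn n0) -(tick0 n).
apply: (prod_telescope (b := fun k => c (p (tick n k)))) => k kn.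
have e0 : piece p n k 0 = p (tick n k) by rewrite /piece /subpath /segpath /= mulr0 addr0.
have e1 : piece p n k 1 = p (tick n k.+1) by rewrite /piece /subpath /segpath /=; congr p; ring.
case: (subordinate_piece pX.1 (conj n0 pn) kn) => h.
  have [W0 W1] : U (p (tick n k)) /\ U (p (tick n k.+1)).
    by rewrite -e0 -e1; split; apply: h.2; [exact: I01_0 | exact: I01_1].
  by rewrite hU // /cochain_act e0 e1 !cU // mulgVK.
have [W0 W1] : V (p (tick n k)) /\ V (p (tick n k.+1)).
  by rewrite -e0 -e1; split; apply: h.2; [exact: I01_0 | exact: I01_1].
by rewrite hV // /cochain_act e0 e1 !cV // mulgVK.
Qed.

Lemma cocycle_act (W Y : set X) c u :
  cochain0 W Y c -> cocycle W Y u -> cocycle W Y (cochain_act c u).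
Proof.
move=> c1 [u1 [uh uc]]; split.
  move=> p pY; have [W0 Y0] := pY.2 0 I01_0; have [W1 Y1] := pY.2 1 I01_1.
  by rewrite /cochain_act u1 // !c1 // invg1 !mulg1.
split=> [p q h|p q pp pq e].
  by have [e0 e1] := path_homotopic_ends h; rewrite /cochain_act (uh _ _ h) e0 e1.
by rewrite /cochain_act uc // path_concat0 path_concat1 // -e !mulgA mulgVK.
Qed.

Lemma exists_cocycle_cover (U V Y : set X) uU uV :
  open U -> open V -> U `|` V = setT -> Y `<=` U `&` V ->
  cocycle U Y uU -> cocycle V Y uV -> cohomologous (U `&` V) Y uU uV ->
  exists u, cocycle setT Y u /\ cohomologous U Y u uU /\ cohomologous V Y u uV.
Proof.
move=> oU oV UV YUV cU cV [c [c1 hc]].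
have c1V : cochain0 V Y c by move=> x Vx Yx; apply: c1 => //; apply: YUV.
pose uV' := cochain_act (fun x => inv (c x)) uV.
have cV' : cocycle V Y uV'.
  by apply: cocycle_act cV => x Vx Yx; rewrite c1V // invg1.
have agree p : is_path (U `&` V) p -> uU p = uV' p.
  by move=> pUV; rewrite /uV' /cochain_act hc // invgK !mulgA mulVg mul1g mulgVK.
have YU : Y `<=` U by move=> y /YUV [].
exists (glue U V uU uV'); split; first exact: glue_cocycle.
split; first by apply: cohomologous_eq => p pU; rewrite (glue_U cU cV' agree pU).
exists c; split=> // p pV.
by rewrite (glue_V cU cV' agree pV) /uV' /cochain_act invgK !mulgA mulgV mul1g mulgK.
Qed.

Lemma cochains_agree (U V Y : set X) (u v : (R -> X) -> G) (cu cv : X -> G) g :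
  cochain0 U Y cu -> cochain0 V Y cv ->
  (forall p, is_path U p -> v p = cochain_act cu u p) ->
  (forall p, is_path V p -> v p = cochain_act cv u p) ->
  is_path (U `&` V) g -> Y (g 0) -> cu (g 1) = cv (g 1).
Proof.
move=> c0U c0V hU hV gUV Yg0; have [U0 V0] := gUV.2 0 I01_0.
have eU := hU g (is_path_sub (@subIsetl _ U V) gUV).
have eV := hV g (is_path_sub (@subIsetr _ U V) gUV).
rewrite /cochain_act c0U // mul1g in eU; rewrite /cochain_act c0V // mul1g in eV.
by apply/invg_inj/(mulgI (u g)); rewrite -eU -eV.
Qed.

Lemma cohomologous_of_restrictions (U V Y : set X) u v :
  open U -> open V -> U `|` V = setT -> Y `<=` U `&` V ->
  (forall x, (U `&` V) x -> exists g, [/\ is_path (U `&` V) g, Y (g 0) & g 1 = x]) ->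
  cocycle setT Y u -> cocycle setT Y v ->
  cohomologous U Y u v -> cohomologous V Y u v -> cohomologous setT Y u v.
Proof.
move=> oU oV UV YUV conn cu cv [cU [c0U hU]] [cV [c0V hV]].
apply: (cohomologous_of_cover oU oV UV _ cu cv c0U hU hV) => [y /YUV [] //|x Ux Vx].
have [g [gUV Yg0 <-]] := conn x (conj Ux Vx).
exact: (cochains_agree c0U c0V hU hV gUV Yg0).
Qed.

(** * Path components *)

Section Components.
Variables (S : set X) (n : nat) (A : 'I_n.+1 -> set X).
Hypothesis hA : path_components_of R S A.

Definition component_index (x : X) : 'I_n.+1 := xget ord0 [set i | A i x].

Lemma component_eq i j x : A i x -> A j x -> i = j.
Proof.
move=> Ai Aj; have [_ [_ [hd _]]] := hA.
by case: (eqVneq i j) => // /hd /seteqP[/(_ x) + _] => /(_ (conj Ai Aj)).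
Qed.

Lemma component_indexE i x : A i x -> component_index x = i.
Proof.
move=> Ai; apply: (component_eq _ Ai).
exact: (xgetPex ord0 (P := [set i | A i x]) (ex_intro _ i Ai)).
Qed.

Lemma component_path_end g : is_path S g -> A (component_index (g 0)) (g 1).
Proof.
move=> gS; have [_ [_ [_ hiff]]] := hA.
have [j [Aj0 Aj1]] :=
  (hiff _ _ (gS.2 0 I01_0) (gS.2 1 I01_1)).1 (ex_intro _ g (conj gS (conj erefl erefl))).
by rewrite (component_indexE Aj0).
Qed.

Lemma is_path_component p : is_path S p -> is_path (A (component_index (p 0))) p.
Proof.
move=> pS; split=> [|s /andP[s0 s1]]; first exact: pS.1.
have sp : is_path S (subpath p 0 s).
  by apply: is_path_subpath pS.1 _ _ _ _ => // t /andP[? ?]; apply: pS.2; apply/andP; split; lra.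
by have := component_path_end sp; rewrite /subpath /segpath /= !subr0 mulr0 mulr1 addr0 add0r.
Qed.

Lemma path_homotopic_component p q :
  path_homotopic S p q -> path_homotopic (A (component_index (p 0))) p q.
Proof.
move=> pq; have [e0 _] := path_homotopic_ends pq.
case: pq => pS [qS [H [cH [HS [H0 HE]]]]].
split; first exact: is_path_component.
split; first by rewrite e0; apply: is_path_component.
exists H; do 2!split=> //; move=> [z1 z2] sz.
have gS : is_path S (segpath H 0 0 z1 z2).
  by apply: (is_path_segpath (a := 0) (b := 1) (c := 0) (d := 1) cH HS) => //;
    split; rewrite /= lexx ler01.
have := component_path_end gS.
by rewrite /segpath /= !subr0 !mulr0 !mulr1 !addr0 !add0r (H0 0 I01_0).
Qed.

Variable a : 'I_n.+1 -> X.
Hypothesis ha : forall i, A i (a i).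

Lemma component_connected x : S x -> exists g, [/\ is_path S g, range a (g 0) & g 1 = x].
Proof.
move=> Sx; have [hs [_ [_ hiff]]] := hA.
have [i [Ax _]] :=
  (hiff x x Sx Sx).1 (ex_intro _ (fun=> x) (conj (is_path_cst Sx) (conj erefl erefl))).
have [g [gS [g0 g1]]] := (hiff _ _ (hs _ _ (ha i)) Sx).2 (ex_intro _ i (conj (ha i) Ax)).
by exists g; split=> //; rewrite g0; exists i.
Qed.

Lemma cohomologous_components w w' :
  (forall i, cohomologous (A i) [set a i] w w') -> cohomologous S (range a) w w'.
Proof.
move=> /choice[c hc]; exists (fun x => c (component_index x) x); split.
  move=> x Sx [j _ <-]; rewrite (component_indexE (ha j)).
  by have [c0 _] := hc j; apply: c0.
move=> p pS; have pA := is_path_component pS.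
by have [_ ->] := hc (component_index (p 0)); rewrite // (component_indexE (pA.2 1 I01_1)).
Qed.

Lemma cocycle_components ws : (forall i, cocycle (A i) [set a i] (ws i)) ->
  cocycle S (range a) (fun p => ws (component_index (p 0)) p).
Proof.
move=> hws; split.
  move=> p [cp pSY]; have pS : is_path S p by split=> // s /pSY [].
  have pA := is_path_component pS; have [w1 _] := hws (component_index (p 0)).
  apply: w1; split=> // s Is; split; first exact: pA.2.
  have [_ [j _ ej]] := pSY s Is.
  have Aj : A j (p s) by rewrite -ej; apply: ha.
  by rewrite /= (component_eq (pA.2 s Is) Aj) ej.
split=> [p q h|p q pS qS e].
  have [e0 _] := path_homotopic_ends h; rewrite -e0.
  by have [_ [w2 _]] := hws (component_index (p 0)); apply/w2/path_homotopic_component.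
have pA := is_path_component pS; have qA := is_path_component qS.
have eq0 : component_index (q 0) = component_index (p 0).
  by apply: component_indexE; rewrite -e; apply: pA.2 1 I01_1.
rewrite path_concat0 eq0 in qA *; have [_ [_ w3]] := hws (component_index (p 0)).
by rewrite w3.
Qed.

Lemma exists_cocycle_components ws : (forall i, cocycle (A i) [set a i] (ws i)) ->
  exists w, cocycle S (range a) w /\ forall i, cohomologous (A i) [set a i] w (ws i).
Proof.
move=> hws; exists (fun p => ws (component_index (p 0)) p); split.
  exact: cocycle_components.
by move=> i; apply: cohomologous_eq => p pA; rewrite (component_indexE (pA.2 0 I01_0)).
Qed.

End Components.

End NonAbelianH1.

Theorem theorem6p8 (R : realType) (X : topologicalType) (G : groupType)
    (U V : set X) (m : nat) (A : 'I_m.+1 -> set X) (a : 'I_m.+1 -> X) :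
  open U -> open V -> path_connected R U -> path_connected R V ->
  U `|` V = setT -> (1 <= m)%N ->
  path_components_of R (U `&` V) A -> (forall i, A i (a i)) ->
  let Y := range a in
  let UV := U `&` V in
  [/\
   (* the restriction maps r_U, r_V, r_{U cap V}, r_{A_i} are well defined *)
   (forall u v : (R -> X) -> G,
      (cocycle setT Y u -> cocycle U Y u /\ cocycle V Y u) /\
      (cohomologous setT Y u v -> cohomologous U Y u v /\ cohomologous V Y u v) /\
      (cocycle U Y u -> cocycle UV Y u) /\
      (cohomologous U Y u v -> cohomologous UV Y u v) /\
      (cocycle V Y u -> cocycle UV Y u) /\
      (cohomologous V Y u v -> cohomologous UV Y u v) /\
      (forall i, cocycle UV Y u -> cocycle (A i) [set a i] u) /\
      (forall i, cohomologous UV Y u v -> cohomologous (A i) [set a i] u v)),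
   (* commutativity: r_{UV} (r_U [u]) = r_{UV} (r_V [u]) *)
   (forall u : (R -> X) -> G, cocycle setT Y u -> cohomologous UV Y u u),
   (* (r_U, r_V) is injective on H^1(X,Y) *)
   (forall u v : (R -> X) -> G, cocycle setT Y u -> cocycle setT Y v ->
      cohomologous U Y u v -> cohomologous V Y u v ->
      cohomologous setT Y u v),
   (* (r_U, r_V) maps onto the fibered product over H^1(U cap V, Y) *)
   (forall uU uV : (R -> X) -> G, cocycle U Y uU -> cocycle V Y uV ->
      cohomologous UV Y uU uV ->
      exists u : (R -> X) -> G, cocycle setT Y u /\
        cohomologous U Y u uU /\ cohomologous V Y u uV) &
   (* restriction to the components: H^1(U cap V, Y) ~= prod_i H^1(A_i, a_i) *)
   ((forall w w' : (R -> X) -> G, cocycle UV Y w -> cocycle UV Y w' ->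
       (forall i, cohomologous (A i) [set a i] w w') ->
       cohomologous UV Y w w') /\
    (forall ws : 'I_m.+1 -> (R -> X) -> G,
       (forall i, cocycle (A i) [set a i] (ws i)) ->
       exists w : (R -> X) -> G, cocycle UV Y w /\
         forall i, cohomologous (A i) [set a i] w (ws i)))].
Proof.
move=> oU oV _ _ cover _ hA ha Y UV.
have YUV : Y `<=` UV by move=> y [i _ <-]; exact: hA.1 i _ (ha i).
have AUV i : A i `&` [set a i] `<=` UV `&` Y.
  by move=> x [Ax ->]; split; [exact: hA.1 | exists i].
split.
- move=> u v; refine (conj _ (conj _ (conj _ (conj _ (conj _ (conj _ (conj _ _))))))).
  + by move=> cu; split; apply: cocycle_restrict cu.
  + by move=> cu; split; apply: cohomologous_restrict cu.
  + by apply: cocycle_restrict => x [].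
  + by apply: cohomologous_restrict => x [].
  + by apply: cocycle_restrict => x [].
  + by apply: cohomologous_restrict => x [].
  + by move=> i; apply: cocycle_sub; [exact: hA.1 | exact: AUV].
  + by move=> i; apply: cohomologous_sub; [exact: hA.1 | exact: AUV].
- by move=> u _; apply: cohomologous_eq.
- move=> u v cu cv; apply: cohomologous_of_restrictions => //.
  by move=> x Sx; apply: (component_connected hA ha Sx).
- by move=> uU uV; apply: exists_cocycle_cover.
- by split=> [w w' _ _|]; [apply: cohomologous_components | apply: exists_cocycle_components].
Qed.
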